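(* Grant (Lip-Conv) and (Conv), and let $\rho>0$. On the event $$\Omega'_K=\Big\{\forall f\in F\text{ with }P\mathcal L_f\le\rho,\ \exists J\subset\{1,\dots,K\},|J|>K/2,\ \forall k\in J:\ |(P_{B_k}-P)\mathcal L_f|\le\rho/4\Big\},$$ any minmax MOM estimator $\hat f\in\operatorname{argmin}_{f\in F}\sup_{g\in F}\mathrm{MOM}_K(\ell_f-\ell_g)$ satisfies $P\mathcal L_{\hat f}\le\rho$. (In the paper, $\rho=\bar r_2^2(\gamma)$.)
   Context: Setting: $\bar{\mathcal Y}\subset\mathbb R$ convex, $F\subset L_1(\mu)$ a class of measurable functions $\mathcal X\to\bar{\mathcal Y}$, $\bar\ell:\bar{\mathcal Y}\times\mathcal Y\to\mathbb R$, $\ell_f(x,y)=\bar\ell(f(x),y)$, $(X,Y)\sim P$, $X\sim\mu$, $Pg=\mathbb Eg(X,Y)$; $f^*$ unique minimizer of $f\mapsto P\ell_f$ over $F$, $\mathcal L_f=\ell_f-\ell_{f^*}$. (Lip-Conv): there is $L>0$ with $u\mapsto\bar\ell(u,y)$ convex and $L$-Lipschitz for all $y$. (Conv): $F$ convex. Data $(X_i,Y_i)_{i=1}^N$; $K$ divides $N$; blocks $B_1,\dots,B_K$ of size $N/K$ partition $\{1,\dots,N\}$; $P_{B_k}g=\frac KN\sum_{i\in B_k}g(X_i,Y_i)$; $\mathrm{MOM}_K(g)$ = median of $(P_{B_k}g)_k$. *)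

From Stdlib Require Import Reals Lra Lia List Arith.
Import ListNotations.
Open Scope R_scope.

(* ---------- Abstract expectation (integral) ------------------------------
   [Int] = the integrable functions on Z (here Z = X * Y, the law P of (X,Y)),
   [E] = the expectation P g = E g(X,Y). *)
Definition is_expectation {Z : Type} (Int : (Z -> R) -> Prop) (E : (Z -> R) -> R)
  : Prop :=
  Int (fun _ => 1) /\ E (fun _ => 1) = 1 /\
  (forall g h, Int g -> Int h -> Int (fun z => g z + h z)
               /\ E (fun z => g z + h z) = E g + E h) /\
  (forall c g, Int g -> Int (fun z => c * g z) /\ E (fun z => c * g z) = c * E g) /\
  (forall g, Int g -> Int (fun z => Rabs (g z))) /\
  (forall g h, Int g -> Int h -> (forall z, g z <= h z) -> E g <= E h).

Definition loss_of {X Y : Type} (lbar : R -> Y -> R) (f : X -> R) : X * Y -> R :=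
  fun z => lbar (f (fst z)) (snd z).

Definition excess {X Y : Type} (lbar : R -> Y -> R) (f fstar : X -> R) : X * Y -> R :=
  fun z => loss_of lbar f z - loss_of lbar fstar z.

Definition sumR (l : list nat) (a : nat -> R) : R := fold_right (fun i s => a i + s) 0 l.

Definition block (N : nat) (blk : nat -> nat) (k : nat) : list nat :=
  filter (fun i => Nat.eqb (blk i) k) (seq 0 N).

Definition is_block_partition (N K : nat) (blk : nat -> nat) : Prop :=
  (forall i, (i < N)%nat -> (blk i < K)%nat) /\
  (forall k, (k < K)%nat -> length (block N blk k) = (N / K)%nat).

Definition PB {Z : Type} (N K : nat) (blk : nat -> nat) (data : nat -> Z)
  (k : nat) (g : Z -> R) : R :=
  INR K / INR N * sumR (block N blk k) (fun i => g (data i)).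

Definition count_le (K : nat) (v : nat -> R) (t : R) : nat :=
  length (filter (fun k => if Rle_dec (v k) t then true else false) (seq 0 K)).

(* Empirical median of v 0, ..., v (K-1): the (lower) empirical 1/2-quantile
   inf { t | #{k : v k <= t} >= K/2 }, which is attained at some v k. *)
Definition median (K : nat) (v : nat -> R) : R :=
  match filter (fun k => Nat.leb K (2 * count_le K v (v k))) (seq 0 K) with
  | [] => 0
  | k0 :: ks => fold_right (fun k m => Rmin (v k) m) (v k0) ks
  end.

Definition MOM {Z : Type} (N K : nat) (blk : nat -> nat) (data : nat -> Z)
  (g : Z -> R) : R :=
  median K (fun k => PB N K blk data k g).

From Stdlib Require Import Reals List.
From Stdlib Require Import Lra Lia FunctionalExtensionality.
Open Scope R_scope.

(* The argument compares fhat with the oracle f* through two facts.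
   (1) Medians: if a strict majority of the block values v_k is <= a
       (resp. >= a), then the median of (v_k) is <= a (resp. >= a).
   (2) Localisation by convexity: if P L_f > rho, the segment
       f_t = t f + (1-t) f* stays in F and t |-> P L_{f_t} is continuous
       (the loss is Lipschitz), so P L_{f_t} = rho for some t in (0,1].
       On Omega'_K a majority of blocks then has P_{B_k} L_{f_t} >= 3rho/4,
       and convexity of the loss gives P_{B_k} L_{f_t} <= t P_{B_k} L_f,
       hence P_{B_k} L_f >= 3rho/4 on that majority.
   From (1) and (2): MOM_K(l_{f*} - l_g) <= rho/4 for every g in F, while
   P L_fhat > rho would force MOM_K(l_fhat - l_{f*}) >= 3rho/4.  The minmax
   property of fhat, compared with the competitor f*, excludes the latter. *)

Definition majority (K : nat) (P : nat -> Prop) : Prop :=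
  exists J : list nat, NoDup J /\ (forall k, In k J -> (k < K)%nat) /\
    (K < 2 * length J)%nat /\ forall k, In k J -> P k.

Lemma fold_Rmin_le (v : nat -> R) k0 ks k :
  In k (k0 :: ks) -> fold_right (fun k m => Rmin (v k) m) (v k0) ks <= v k.
Proof.
  revert k; induction ks as [|k1 ks IH]; intros k Hk; simpl in *.
  - destruct Hk as [<-|[]]; lra.
  - destruct Hk as [<-|[<-|Hk]].
    + eapply Rle_trans; [apply Rmin_r | apply IH; simpl; auto].
    + apply Rmin_l.
    + eapply Rle_trans; [apply Rmin_r | apply IH; simpl; auto].
Qed.

Lemma fold_Rmin_attained (v : nat -> R) k0 ks :
  exists k, In k (k0 :: ks) /\ fold_right (fun k m => Rmin (v k) m) (v k0) ks = v k.
Proof.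
  induction ks as [|k1 ks IH]; simpl.
  - exists k0; auto.
  - destruct IH as [k [Hk Hkv]]. rewrite Hkv. unfold Rmin.
    destruct (Rle_dec (v k1) (v k)).
    + exists k1; auto.
    + exists k; simpl in Hk; destruct Hk; auto.
Qed.

Definition median_candidates (K : nat) (v : nat -> R) : list nat :=
  filter (fun k => Nat.leb K (2 * count_le K v (v k))) (seq 0 K).

Lemma median_le_candidate K v k : In k (median_candidates K v) -> median K v <= v k.
Proof.
  unfold median; fold (median_candidates K v).
  destruct (median_candidates K v) as [|k0 ks]; [intros []|apply fold_Rmin_le].
Qed.

Lemma median_attained K v :
  median_candidates K v <> nil ->
  exists k, In k (median_candidates K v) /\ median K v = v k.
Proof.
  unfold median; fold (median_candidates K v).
  destruct (median_candidates K v) as [|k0 ks]; [congruence|].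
  intros _; apply fold_Rmin_attained.
Qed.

Lemma count_le_lower K v (J : list nat) t :
  NoDup J -> (forall k, In k J -> (k < K)%nat) -> (forall k, In k J -> v k <= t) ->
  (length J <= count_le K v t)%nat.
Proof.
  intros HJ HJK Hv. apply NoDup_incl_length; auto.
  intros j Hj. apply filter_In; split.
  - apply in_seq. specialize (HJK j Hj); lia.
  - destruct (Rle_dec (v j) t) as [_|Hn]; [reflexivity|]. exfalso; apply Hn, Hv, Hj.
Qed.

Lemma count_le_upper K v (J : list nat) t :
  NoDup J -> (forall k, In k J -> (k < K)%nat) -> (forall k, In k J -> t < v k) ->
  (count_le K v t + length J <= K)%nat.
Proof.
  intros HJ HJK Hv. unfold count_le.
  set (C := filter _ (seq 0 K)).
  rewrite <- length_app, <- (length_seq K 0). apply NoDup_incl_length.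
  - apply NoDup_app; auto.
    + apply NoDup_filter, seq_NoDup.
    + intros x Hx HxJ. apply filter_In in Hx as [_ Hx].
      destruct (Rle_dec (v x) t); [|discriminate]. specialize (Hv x HxJ); lra.
  - intros x Hx. apply in_app_or in Hx as [Hx|Hx].
    + apply filter_In in Hx; tauto.
    + apply in_seq; specialize (HJK x Hx); lia.
Qed.

Lemma argmax_exists (l : list nat) (v : nat -> R) :
  l <> nil -> exists k, In k l /\ forall j, In j l -> v j <= v k.
Proof.
  induction l as [|a l IH]; [congruence|]. intros _.
  destruct l as [|b l].
  - exists a; split; [simpl; auto|]. intros j [<-|[]]; lra.
  - destruct IH as [k [Hk Hmax]]; [congruence|].
    destruct (Rle_dec (v a) (v k)).
    + exists k; split; [simpl; auto|]. intros j [<-|Hj]; auto.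
    + exists a; split; [simpl; auto|]. intros j [<-|Hj]; [lra|].
      specialize (Hmax j Hj); lra.
Qed.

(* A largest value is always a candidate, so the median is a genuine value. *)
Lemma median_candidates_nonempty K v : (0 < K)%nat -> median_candidates K v <> nil.
Proof.
  intros HK.
  destruct (argmax_exists (seq 0 K) v) as [k [Hk Hmax]].
  { destruct K; [lia | simpl; congruence]. }
  assert (Hcand : In k (median_candidates K v)).
  { apply filter_In; split; auto. apply Nat.leb_le.
    assert (Hrange : forall j, In j (seq 0 K) -> (j < K)%nat)
      by (intros j Hj; apply in_seq in Hj; lia).
    pose proof (count_le_lower K v (seq 0 K) (v k) (seq_NoDup K 0) Hrange Hmax) as Hc.
    rewrite length_seq in Hc; lia. }
  intros Hnil; rewrite Hnil in Hcand; destruct Hcand.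
Qed.

Lemma median_le_of_majority K v a : majority K (fun k => v k <= a) -> median K v <= a.
Proof.
  intros (J & HJ & HJK & HJlen & Hv).
  destruct (argmax_exists J v) as [k [Hk Hmax]]. { intros ->; simpl in HJlen; lia. }
  eapply Rle_trans; [apply median_le_candidate | apply Hv, Hk].
  apply filter_In; split.
  - apply in_seq; specialize (HJK k Hk); lia.
  - apply Nat.leb_le. pose proof (count_le_lower K v J (v k) HJ HJK Hmax); lia.
Qed.

Lemma median_ge_of_majority K v a :
  (0 < K)%nat -> majority K (fun k => a <= v k) -> a <= median K v.
Proof.
  intros HK (J & HJ & HJK & HJlen & Hv).
  destruct (median_attained K v (median_candidates_nonempty K v HK)) as [k0 [Hk0 ->]].
  destruct (Rle_dec a (v k0)) as [|Hlt]; auto. exfalso.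
  apply filter_In in Hk0 as [_ Hc]. apply Nat.leb_le in Hc.
  assert (Hgt : forall k, In k J -> v k0 < v k) by (intros k Hk; specialize (Hv k Hk); lra).
  pose proof (count_le_upper K v J (v k0) HJ HJK Hgt); lia.
Qed.

Lemma sumR_le (l : list nat) (a b : nat -> R) :
  (forall i, a i <= b i) -> sumR l a <= sumR l b.
Proof. intros H; induction l as [|i l IH]; simpl; [lra|]. specialize (H i); lra. Qed.

Lemma sumR_scale (l : list nat) (a b : nat -> R) c :
  (forall i, a i = c * b i) -> sumR l a = c * sumR l b.
Proof. intros H; induction l as [|i l IH]; simpl; [ring|]. rewrite H, IH; ring. Qed.

Lemma PB_monotone {Z} N K blk (data : nat -> Z) k (g h : Z -> R) :
  (0 < N)%nat -> (forall z, g z <= h z) -> PB N K blk data k g <= PB N K blk data k h.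
Proof.
  intros HN H. unfold PB. apply Rmult_le_compat_l.
  - unfold Rdiv; apply Rmult_le_pos; [apply pos_INR | left; apply Rinv_0_lt_compat, lt_0_INR; lia].
  - apply sumR_le; intros; apply H.
Qed.

Lemma PB_scale {Z} N K blk (data : nat -> Z) k (g h : Z -> R) c :
  (forall z, g z = c * h z) -> PB N K blk data k g = c * PB N K blk data k h.
Proof.
  intros H. unfold PB. rewrite (sumR_scale _ _ (fun i => h (data i)) c) by (intros; apply H).
  ring.
Qed.

Section Expectation.
Context {Z : Type} {Int : (Z -> R) -> Prop} {E : (Z -> R) -> R}.
Hypothesis HE : is_expectation Int E.

Lemma E_sub g h : Int g -> Int h ->
  Int (fun z => g z - h z) /\ E (fun z => g z - h z) = E g - E h.
Proof.
  destruct HE as (_ & _ & Hadd & Hscal & _ & _). intros Hg Hh.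
  replace (fun z => g z - h z) with (fun z => g z + (-1 * h z))
    by (apply functional_extensionality; intros; ring).
  destruct (Hscal (-1) h Hh) as [Ih Eh]. destruct (Hadd g _ Hg Ih) as [Igh Egh].
  split; auto. rewrite Egh, Eh; ring.
Qed.

Lemma E_nonneg g : Int g -> (forall z, 0 <= g z) -> 0 <= E g.
Proof.
  destruct HE as (I1 & E1 & _ & Hscal & _ & Hmon). intros Hg Hpos.
  destruct (Hscal 0 (fun _ => 1) I1) as [I0 E0].
  replace 0 with (E (fun _ : Z => 0 * 1)) by (rewrite E0; ring).
  apply Hmon; auto. intros z; specialize (Hpos z); lra.
Qed.

Lemma E_diff_bound g h k : Int g -> Int h -> Int k ->
  (forall z, Rabs (g z - h z) <= k z) -> Rabs (E g - E h) <= E k.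
Proof.
  destruct HE as (_ & _ & Hadd & _ & _ & Hmon). intros Hg Hh Hk Hz.
  destruct (Hadd h k Hh Hk) as [Ihk Ehk]. destruct (Hadd g k Hg Hk) as [Igk Egk].
  assert (E g <= E h + E k).
  { rewrite <- Ehk. apply Hmon; auto. intros z; specialize (Hz z).
    unfold Rabs in Hz; destruct Rcase_abs; lra. }
  assert (E h <= E g + E k).
  { rewrite <- Egk. apply Hmon; auto. intros z; specialize (Hz z).
    unfold Rabs in Hz; destruct Rcase_abs; lra. }
  unfold Rabs; destruct Rcase_abs; lra.
Qed.

End Expectation.

Lemma lipschitz_continuity (h : R -> R) C :
  0 <= C -> (forall t s, Rabs (h t - h s) <= C * Rabs (t - s)) -> continuity h.
Proof.
  intros HC H x eps Heps. exists (eps / (C + 1)). split.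
  { apply Rdiv_lt_0_compat; lra. }
  intros y [_ Hy]. simpl in *. unfold Rdist in *.
  eapply Rle_lt_trans; [apply H|].
  assert (Rabs (y - x) * (C + 1) < eps).
  { apply (Rmult_lt_compat_r (C + 1)) in Hy; [|lra]. unfold Rdiv in Hy.
    rewrite Rmult_assoc, Rinv_l in Hy by lra. lra. }
  pose proof (Rabs_pos (y - x)). nra.
Qed.

(* Projection of R onto [0,1]; it makes the segment below a total,
   1-Lipschitz parametrisation, as required by the intermediate value theorem. *)
Definition clamp (t : R) : R := Rmax 0 (Rmin 1 t).

Lemma clamp_lipschitz t s : Rabs (clamp t - clamp s) <= Rabs (t - s).
Proof. unfold clamp, Rmax, Rmin, Rabs; repeat destruct Rle_dec; repeat destruct Rcase_abs; lra. Qed.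

Lemma clamp_range t : 0 <= clamp t <= 1.
Proof. unfold clamp, Rmax, Rmin; repeat destruct Rle_dec; lra. Qed.

Lemma clamp_id t : 0 <= t <= 1 -> clamp t = t.
Proof. unfold clamp, Rmax, Rmin; repeat destruct Rle_dec; lra. Qed.

Definition segment {X : Type} (f g : X -> R) (t : R) : X -> R :=
  fun x => clamp t * f x + (1 - clamp t) * g x.

Lemma segment_0 {X : Type} (f g : X -> R) : segment f g 0 = g.
Proof. apply functional_extensionality; intros; unfold segment; rewrite clamp_id by lra; ring. Qed.

Lemma segment_1 {X : Type} (f g : X -> R) : segment f g 1 = f.
Proof. apply functional_extensionality; intros; unfold segment; rewrite clamp_id by lra; ring. Qed.

Section Localisation.
Context {X Y : Type} {Int : (X * Y -> R) -> Prop} {E : (X * Y -> R) -> R}.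
Hypothesis HE : is_expectation Int E.
Context {Ybar : R -> Prop} {F : (X -> R) -> Prop} {lbar : R -> Y -> R}.
Hypothesis HFval : forall f, F f -> forall x, Ybar (f x).
Hypothesis HFL1 : forall f, F f -> Int (fun z => f (fst z)).
Hypothesis Hloss_int : forall f, F f -> Int (loss_of lbar f).
Hypothesis HFconv : forall f g t, F f -> F g -> 0 <= t <= 1 ->
  F (fun x => t * f x + (1 - t) * g x).

Lemma segment_in_F f g t : F f -> F g -> F (segment f g t).
Proof. intros Hf Hg; apply HFconv; auto; apply clamp_range. Qed.

Lemma segment_excess_le
  (Hconvex : forall y u v t, Ybar u -> Ybar v -> 0 <= t <= 1 ->
     lbar (t * u + (1 - t) * v) y <= t * lbar u y + (1 - t) * lbar v y)
  f g t : F f -> F g -> 0 <= t <= 1 ->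
  forall z, excess lbar (segment f g t) g z <= t * excess lbar f g z.
Proof.
  intros Hf Hg Ht z. unfold excess, loss_of, segment. rewrite clamp_id by exact Ht.
  pose proof (Hconvex (snd z) (f (fst z)) (g (fst z)) t (HFval f Hf _) (HFval g Hg _) Ht).
  lra.
Qed.

Lemma segment_risk_continuous (L : R) (HL : 0 < L)
  (Hlip : forall y u v, Ybar u -> Ybar v -> Rabs (lbar u y - lbar v y) <= L * Rabs (u - v))
  f g : F f -> F g -> continuity (fun t => E (loss_of lbar (segment f g t))).
Proof.
  intros Hf Hg.
  set (D := fun z : X * Y => Rabs (f (fst z) - g (fst z))).
  pose proof HE as (_ & _ & _ & Hscal & Habs & _).
  assert (ID : Int D) by (apply Habs, (E_sub HE); auto).
  assert (ED : 0 <= E D) by (apply (E_nonneg HE); auto; intros; apply Rabs_pos).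
  apply (lipschitz_continuity _ (L * E D)); [apply Rmult_le_pos; lra|]. intros t s.
  destruct (Hscal (L * Rabs (t - s)) D ID) as [IkD EkD].
  replace (L * E D * Rabs (t - s)) with (E (fun z => L * Rabs (t - s) * D z))
    by (rewrite EkD; ring).
  apply (E_diff_bound HE); auto using segment_in_F. intros z. unfold loss_of.
  eapply Rle_trans; [apply Hlip; apply HFval; auto using segment_in_F|].
  unfold segment, D.
  replace (clamp t * f (fst z) + (1 - clamp t) * g (fst z) -
           (clamp s * f (fst z) + (1 - clamp s) * g (fst z)))
    with ((clamp t - clamp s) * (f (fst z) - g (fst z))) by ring.
  rewrite Rabs_mult, <- Rmult_assoc. apply Rmult_le_compat_r; [apply Rabs_pos|].
  apply Rmult_le_compat_l; [lra | apply clamp_lipschitz].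
Qed.

Lemma segment_hits_level (L : R) (HL : 0 < L)
  (Hlip : forall y u v, Ybar u -> Ybar v -> Rabs (lbar u y - lbar v y) <= L * Rabs (u - v))
  f g rho : F f -> F g -> 0 < rho -> rho < E (excess lbar f g) ->
  exists t, 0 < t <= 1 /\ E (excess lbar (segment f g t) g) = rho.
Proof.
  intros Hf Hg Hrho Hlevel.
  assert (Hex : forall h, F h -> E (excess lbar h g) = E (loss_of lbar h) - E (loss_of lbar g))
    by (intros h Hh; apply (E_sub HE); auto).
  rewrite Hex in Hlevel by auto.
  set (psi := fun t => E (loss_of lbar (segment f g t)) - E (loss_of lbar g) - rho).
  assert (Hpsi : continuity psi).
  { apply continuity_minus; [|apply continuity_const; intros ? ?; reflexivity].
    apply continuity_minus; [|apply continuity_const; intros ? ?; reflexivity].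
    exact (segment_risk_continuous L HL Hlip f g Hf Hg). }
  destruct (IVT psi 0 1 Hpsi) as [t [Ht Hpsit]];
    [lra | unfold psi; rewrite segment_0; lra | unfold psi; rewrite segment_1; lra |].
  exists t. rewrite Hex by auto using segment_in_F. unfold psi in Hpsit. split; [|lra].
  destruct Ht as [[Ht0|Ht0] Ht1]; split; auto.
  subst t. rewrite segment_0 in Hpsit. lra.
Qed.

End Localisation.

Section MinmaxMOM.
Context {X Y : Type} {Int : (X * Y -> R) -> Prop} {E : (X * Y -> R) -> R}.
Hypothesis HE : is_expectation Int E.
Context {Ybar : R -> Prop} {F : (X -> R) -> Prop} {lbar : R -> Y -> R}.
Hypothesis HFval : forall f, F f -> forall x, Ybar (f x).
Hypothesis HFL1 : forall f, F f -> Int (fun z => f (fst z)).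
Hypothesis Hloss_int : forall f, F f -> Int (loss_of lbar f).
Hypothesis HFconv : forall f g t, F f -> F g -> 0 <= t <= 1 ->
  F (fun x => t * f x + (1 - t) * g x).
Hypothesis Hconvex : forall y u v t, Ybar u -> Ybar v -> 0 <= t <= 1 ->
  lbar (t * u + (1 - t) * v) y <= t * lbar u y + (1 - t) * lbar v y.
Variable L : R.
Hypothesis HL : 0 < L.
Hypothesis Hlip : forall y u v, Ybar u -> Ybar v ->
  Rabs (lbar u y - lbar v y) <= L * Rabs (u - v).
Variable fstar : X -> R.
Hypothesis Hfstar : F fstar.
Hypothesis Hfstar_min : forall f, F f -> E (loss_of lbar fstar) <= E (loss_of lbar f).
Variables (N K : nat) (blk : nat -> nat) (data : nat -> X * Y) (rho : R).
Hypothesis HN : (0 < N)%nat.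
Hypothesis Hrho : 0 < rho.
Hypothesis Hevent : forall f, F f -> E (excess lbar f fstar) <= rho ->
  majority K (fun k =>
    Rabs (PB N K blk data k (excess lbar f fstar) - E (excess lbar f fstar)) <= rho / 4).

Lemma large_excess_majority f : F f -> rho < E (excess lbar f fstar) ->
  majority K (fun k => 3 * rho / 4 <= PB N K blk data k (excess lbar f fstar)).
Proof.
  intros Hf Hlarge.
  destruct (segment_hits_level HE HFval HFL1 Hloss_int HFconv L HL Hlip
              f fstar rho Hf Hfstar Hrho Hlarge) as [t [Ht Hlevel]].
  set (ft := segment f fstar t) in Hlevel |- *.
  destruct (Hevent ft (segment_in_F HFconv f fstar t Hf Hfstar) (Req_le _ _ Hlevel))
    as (J & HJ & HJK & HJlen & Hdev).
  exists J; repeat split; auto. intros k Hk.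
  specialize (Hdev k Hk); rewrite Hlevel in Hdev.
  assert (Hshrink : PB N K blk data k (excess lbar ft fstar)
                    <= t * PB N K blk data k (excess lbar f fstar)).
  { rewrite <- (PB_scale N K blk data k (fun z => t * excess lbar f fstar z)) by reflexivity.
    apply PB_monotone; auto. apply (segment_excess_le HFval Hconvex); auto; lra. }
  assert (3 * rho / 4 <= PB N K blk data k (excess lbar ft fstar))
    by (unfold Rabs in Hdev; destruct Rcase_abs; lra).
  nra.
Qed.

(* The oracle f* never loses by more than rho/4 in MOM against any g in F:
   on a majority of blocks, P_{B_k} L_g >= -rho/4. *)
Lemma mom_oracle_bound g : F g ->
  MOM N K blk data (fun z => loss_of lbar fstar z - loss_of lbar g z) <= rho / 4.
Proof.
  intros Hg. apply median_le_of_majority.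
  assert (Hflip : forall k, PB N K blk data k (fun z => loss_of lbar fstar z - loss_of lbar g z)
                            = - PB N K blk data k (excess lbar g fstar)).
  { intros k. rewrite (PB_scale N K blk data k _ (excess lbar g fstar) (-1))
      by (intros; unfold excess; ring). ring. }
  destruct (Rle_or_lt (E (excess lbar g fstar)) rho) as [Hsmall|Hlarge].
  - assert (Hnonneg : 0 <= E (excess lbar g fstar)).
    { unfold excess; rewrite (proj2 (E_sub HE _ _ (Hloss_int g Hg) (Hloss_int fstar Hfstar))).
      specialize (Hfstar_min g Hg); lra. }
    destruct (Hevent g Hg Hsmall) as (J & HJ & HJK & HJlen & Hdev).
    exists J; repeat split; auto. intros k Hk. specialize (Hdev k Hk).
    rewrite Hflip. unfold Rabs in Hdev; destruct Rcase_abs; lra.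
  - destruct (large_excess_majority g Hg Hlarge) as (J & HJ & HJK & HJlen & Hbig).
    exists J; repeat split; auto. intros k Hk. specialize (Hbig k Hk).
    rewrite Hflip. lra.
Qed.

End MinmaxMOM.

Theorem lemma5
  (X Y : Type)
  (Int : (X * Y -> R) -> Prop) (E : (X * Y -> R) -> R)
  (HE : is_expectation Int E)
  (Ybar : R -> Prop)
  (HYbar : forall u v t, Ybar u -> Ybar v -> 0 <= t <= 1 -> Ybar (t * u + (1 - t) * v))
  (F : (X -> R) -> Prop)
  (HFval : forall f, F f -> forall x, Ybar (f x))
  (HFL1 : forall f, F f -> Int (fun z => f (fst z)))
  (lbar : R -> Y -> R)
  (Hloss_int : forall f, F f -> Int (loss_of lbar f))
  (fstar : X -> R)
  (Hfstar : F fstar)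
  (Hfstar_min : forall f, F f -> E (loss_of lbar fstar) <= E (loss_of lbar f))
  (Hfstar_uniq : forall f, F f -> E (loss_of lbar f) <= E (loss_of lbar fstar) -> f = fstar)
  (* (Lip-Conv) *)
  (L : R) (HL : 0 < L)
  (Hconvex : forall y u v t, Ybar u -> Ybar v -> 0 <= t <= 1 ->
     lbar (t * u + (1 - t) * v) y <= t * lbar u y + (1 - t) * lbar v y)
  (Hlip : forall y u v, Ybar u -> Ybar v -> Rabs (lbar u y - lbar v y) <= L * Rabs (u - v))
  (* (Conv) *)
  (HFconv : forall f g t, F f -> F g -> 0 <= t <= 1 ->
     F (fun x => t * f x + (1 - t) * g x))
  (* data and blocks *)
  (N K : nat) (HK : (0 < K)%nat) (HN : (0 < N)%nat) (HKN : Nat.divide K N)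
  (blk : nat -> nat) (Hblk : is_block_partition N K blk)
  (data : nat -> X * Y)
  (rho : R) (Hrho : 0 < rho)
  (* the event Omega'_K *)
  (Hevent : forall f, F f -> E (excess lbar f fstar) <= rho ->
     exists J : list nat, NoDup J /\ (forall k, In k J -> (k < K)%nat) /\
       (K < 2 * length J)%nat /\
       forall k, In k J ->
         Rabs (PB N K blk data k (excess lbar f fstar) - E (excess lbar f fstar)) <= rho / 4)
  (* fhat is a minmax MOM estimator:
     fhat in argmin_{f in F} sup_{g in F} MOM_K(l_f - l_g)  (sups in [-oo,+oo]) *)
  (fhat : X -> R) (Hfhat : F fhat)
  (Hargmin : forall f, F f -> forall M : R,
     (forall g, F g -> MOM N K blk data (fun z => loss_of lbar f z - loss_of lbar g z) <= M) ->
     (forall g, F g -> MOM N K blk data (fun z => loss_of lbar fhat z - loss_of lbar g z) <= M))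
  : E (excess lbar fhat fstar) <= rho.
Proof.
  destruct (Rle_or_lt (E (excess lbar fhat fstar)) rho) as [|Hlarge]; auto. exfalso.
  (* fhat does at least as well as the competitor f*, whose MOM sup is <= rho/4 *)
  assert (Hupper : MOM N K blk data (excess lbar fhat fstar) <= rho / 4).
  { apply (Hargmin fstar Hfstar); auto. intros g Hg.
    exact (mom_oracle_bound HE HFval HFL1 Hloss_int HFconv Hconvex L HL Hlip
             fstar Hfstar Hfstar_min N K blk data rho HN Hrho Hevent g Hg). }
  (* but an excess risk above rho makes that MOM at least 3rho/4 *)
  assert (Hlower : 3 * rho / 4 <= MOM N K blk data (excess lbar fhat fstar)).
  { apply median_ge_of_majority; auto.
    exact (large_excess_majority HE HFval HFL1 Hloss_int HFconv Hconvex L HL Hlip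
             fstar Hfstar N K blk data rho HN Hrho Hevent fhat Hfhat Hlarge). }
  lra.
Qed.
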